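(* Let $d:a\mapsto a'$ be a Hardy type series derivation on $\mathbb{K}$. Let $a\in\mathbb{K}^*$ with $a\not\asymp 1$. Then $$\mathrm{LT}\!\left(\frac{a'}{a}\right)=\mathrm{LE}(a)\,\mathrm{LT}\!\left(\frac{\mathrm{LF}(a)'}{\mathrm{LF}(a)}\right);$$ more precisely $\mathrm{LM}(a'/a)=\theta^{(\mathrm{LF}(a))}$ and $\mathrm{LC}(a'/a)=\mathrm{LE}(a)\,\mathrm{LC}\big(\mathrm{LF}(a)'/\mathrm{LF}(a)\big)$. In particular, $\hat\theta$ equals the greatest lower bound (with respect to $\preccurlyeq$) of $\Psi=\{\mathrm{LM}(b'/b): b\in\mathbb{K}^*,\ b\not\asymp 1\}$.
   Context: Let $(\Phi,\preccurlyeq)$ be a totally ordered set; $\mathbf{H}(\Phi)$ is the group of formal products $\gamma=\prod_{\phi}\phi^{\gamma_\phi}$, $\gamma_\phi\in\mathbb{R}$, with anti-well-ordered support $\operatorname{supp}\gamma=\{\phi:\gamma_\phi\neq0\}$, pointwise multiplication and anti-lexicographic order ($\gamma\succ1$ iff the exponent of $\max\operatorname{supp}\gamma$ is positive); $\Phi\subseteq\mathbf H(\Phi)$ via $\phi=\phi^1$. Fix a subgroup $\Gamma\supseteq\Phi$ of $\mathbf H(\Phi)$. For $1\ne\gamma$: $\mathrm{LF}(\gamma)=\max\operatorname{supp}\gamma$, $\mathrm{LE}(\gamma)=\gamma_{\mathrm{LF}(\gamma)}$. $\mathbb{K}=\mathbb{R}((\Gamma))$: formal series $\sum a_\alpha\alpha$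 with anti-well-ordered support $\operatorname{Supp}a\subseteq\Gamma$. For $a\ne0$: $\mathrm{LM}(a)=\max\operatorname{Supp}a$, $\mathrm{LC}(a)$ its coefficient, $\mathrm{LT}(a)=\mathrm{LC}(a)\mathrm{LM}(a)$, $\mathrm{LF}(a)=\mathrm{LF}(\mathrm{LM}(a))$, $\mathrm{LE}(a)=\mathrm{LE}(\mathrm{LM}(a))$. $a\preccurlyeq b$ iff $\mathrm{LM}(a)\preccurlyeq\mathrm{LM}(b)$; $a\asymp b$ iff $\mathrm{LM}(a)=\mathrm{LM}(b)$; $|a|=\max(\mathrm{LM}(a),\mathrm{LM}(a)^{-1})$; $a,b\succ1$ are comparable iff $\mathrm{LF}(a)=\mathrm{LF}(b)$. Summable families: union of supports anti-well-ordered, each monomial in finitely many supports; sums coefficientwise. A series derivation is a map $a\mapsto a'$ on $\mathbb{K}$ with $1'=0$, $\alpha'=\alpha\sum_{\phi\in\operatorname{supp}\alpha}\alpha_\phi\phi'/\phi$ for $\alpha=\prod\phi^{\alpha_\phi}\in\Gamma$, and $a'=\sum a_\alpha\alpha'$ (summable families). It is of Hardy type if: (HD1) its field of constants is $\mathbb{R}$; (HD2) for all $a,b\in\mathbb{K}^*$ with $a,b\not\asymp1$: $a\preccurlyeq b\iff a'\preccurlyeq b'$; (HD3) for all $a,b$ with $|a|\succ|b|\succ1$: $a'/a\succcurlyeq b'/b$, with $a'/a\asymp b'/b$ iff $a$ and $b$ are comparable. Notation: $\theta^{(\phi)}=\mathrm{LM}(\phi'/\phi)$ for $\phi\in\Phi$,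 $\Theta=\{\theta^{(\phi)}:\phi\in\Phi\}$, and $\hat\theta$ is the greatest lower bound of $\Theta$ in $(\Gamma,\preccurlyeq)$ when it exists. *)

From Stdlib Require Import ClassicalEpsilon.
From mathcomp Require Import all_boot all_order all_algebra.
From mathcomp Require Import boolp classical_sets functions cardinality fsbigop.
From mathcomp Require Import Rstruct.
Set Implicit Arguments. Unset Strict Implicit. Unset Printing Implicit Defensive.
Import Order.TTheory GRing.Theory Num.Theory.
Local Open Scope classical_set_scope.
Local Open Scope ring_scope.

Notation R := Rdefinitions.R.

Section HahnSeries.
Context {disp : Order.disp_t} {Phi : orderType disp}.

(* a monomial prod_phi phi^(g phi) is represented by its exponent map g *)
Definition mon := Phi -> R.

Definition anti_wo {X : Type} (le : X -> X -> Prop) (S : set X) : Prop :=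
  forall A : set X, A `<=` S -> A !=set0 ->
    exists2 m, A m & forall x, A x -> le x m.

Definition msupp (g : mon) : set Phi := [set phi | g phi != 0].
Definition isH (g : mon) : Prop := anti_wo (fun x y : Phi => (x <= y)%O) (msupp g).

Definition mone : mon := fun _ => 0.
Definition mmul (g h : mon) : mon := fun phi => g phi + h phi.
Definition minv (g : mon) : mon := fun phi => - g phi.
Definition phim (phi : Phi) : mon := fun psi => if psi == phi then 1 else 0.

Definition mlt (g h : mon) : Prop :=
  exists phi, g phi < h phi /\ forall psi, (phi < psi)%O -> g psi = h psi.
Definition mle (g h : mon) : Prop := g = h \/ mlt g h.

Definition is_LF (g : mon) (phi : Phi) : Prop :=
  g phi != 0 /\ forall psi, g psi != 0 -> (psi <= phi)%O.

Definition mabs (g : mon) : mon := if `[< mle g (minv g) >] then minv g else g.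

Definition is_Gamma (Gamma : set mon) : Prop :=
  [/\ Gamma `<=` isH, Gamma mone,
      (forall g h, Gamma g -> Gamma h -> Gamma (mmul g h)),
      (forall g, Gamma g -> Gamma (minv g)) &
      (forall phi, Gamma (phim phi))].

Definition ser := mon -> R.
Definition Supp (a : ser) : set mon := [set al | a al != 0].

Definition is_series (Gamma : set mon) (a : ser) : Prop :=
  Supp a `<=` Gamma /\ anti_wo mle (Supp a).

Definition szero : ser := fun _ => 0.
Definition smono (al : mon) : ser := fun be => if `[< be = al >] then 1 else 0.
Definition sone : ser := smono mone.
Definition sscale (r : R) (a : ser) : ser := fun be => r * a be.
Definition sadd (a b : ser) : ser := fun be => a be + b be.
Definition smul (a b : ser) : ser := fun al =>
  \sum_(be \in [set be | a be != 0 /\ b (mmul al (minv be)) != 0])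
     (a be * b (mmul al (minv be))).
(* the quotient b / a in K (unique when a <> 0) *)
Definition sdiv (Gamma : set mon) (b a : ser) : ser :=
  epsilon (inhabits szero) (fun q => is_series Gamma q /\ smul q a = b).

Definition LM (a : ser) : mon :=
  epsilon (inhabits mone) (fun al => a al != 0 /\ forall be, a be != 0 -> mle be al).
Definition LC (a : ser) : R := a (LM a).
Definition LT (a : ser) : ser := sscale (LC a) (smono (LM a)).

Definition sle (a b : ser) : Prop :=
  a = szero \/ (b <> szero /\ mle (LM a) (LM b)).

Definition summable {I : choiceType} (F : I -> ser) : Prop :=
  anti_wo mle (\bigcup_(i in setT) Supp (F i)) /\
  forall be, finite_set [set i | F i be != 0].
Definition ssum {I : choiceType} (F : I -> ser) : ser := fun be =>
  \sum_(i \in [set i | F i be != 0]) F i be.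

Definition series_derivation (Gamma : set mon) (d : ser -> ser) : Prop :=
  [/\ (forall a, is_series Gamma a -> is_series Gamma (d a)),
      d sone = szero,
      (forall al, Gamma al ->
         let F := fun phi : Phi =>
           sscale (al phi) (sdiv Gamma (d (smono (phim phi))) (smono (phim phi))) in
         summable F /\ d (smono al) = smul (smono al) (ssum F)) &
      (forall a, is_series Gamma a ->
         let F := fun al : mon => sscale (a al) (d (smono al)) in
         summable F /\ d a = ssum F)].

Definition hardy_type (Gamma : set mon) (d : ser -> ser) : Prop :=
  [/\ series_derivation Gamma d,
      (* HD1 *)
      (forall a, is_series Gamma a ->
         (d a = szero <-> exists r : R, a = sscale r sone)),
      (* HD2 *)
      (forall a b, is_series Gamma a -> is_series Gamma b ->
         a <> szero -> b <> szero -> LM a <> mone -> LM b <> mone ->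
         (sle a b <-> sle (d a) (d b))) &
      (* HD3 *)
      (forall a b, is_series Gamma a -> is_series Gamma b ->
         a <> szero -> b <> szero ->
         mlt (mabs (LM b)) (mabs (LM a)) -> mlt mone (mabs (LM b)) ->
         sle (sdiv Gamma (d b) b) (sdiv Gamma (d a) a) /\
         (LM (sdiv Gamma (d a) a) = LM (sdiv Gamma (d b) b) <->
          exists phi, is_LF (LM a) phi /\ is_LF (LM b) phi))].

Definition theta (Gamma : set mon) (d : ser -> ser) (phi : Phi) : mon :=
  LM (sdiv Gamma (d (smono (phim phi))) (smono (phim phi))).
Definition Theta (Gamma : set mon) (d : ser -> ser) : set mon :=
  range (theta Gamma d).
Definition Psi (Gamma : set mon) (d : ser -> ser) : set mon :=
  [set LM (sdiv Gamma (d b) b) | b in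
     [set b | is_series Gamma b /\ b <> szero /\ LM b <> mone]].
Definition is_glb (Gamma : set mon) (S : set mon) (g : mon) : Prop :=
  [/\ Gamma g, (forall s, S s -> mle g s) &
      (forall h, Gamma h -> (forall s, S s -> mle h s) -> mle h g)].

End HahnSeries.

(* Write [LM a = prod_phi phi^(alpha_phi)] with leading fundamental monomial [f].
   The derivation rule gives [alpha'/alpha = sum_phi alpha_phi phi'/phi]; by HD3
   the leading monomials [theta phi] of the summands increase strictly with [phi],
   so the sum is led by [alpha_f theta f].  By HD2 the leading monomial of
   [d (smono al)] increases strictly with [al], so [a'] is led by the derivative
   of the leading term of [a], and dividing by [a] gives the leading term of
   [a'/a].  Quotients exist in [K] by transfinite long division (Zorn's lemma).
   Consequently every element of [Psi] lies in [Theta] and conversely, so both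
   sets have the same greatest lower bounds. *)

From Stdlib Require Import ClassicalEpsilon.
From mathcomp Require Import all_boot all_order all_algebra.
From mathcomp Require Import boolp classical_sets cardinality fsbigop.
From mathcomp Require Import Rstruct.
Set Implicit Arguments. Unset Strict Implicit. Unset Printing Implicit Defensive.
Import Order.TTheory GRing.Theory Num.Theory.
Local Open Scope classical_set_scope.
Local Open Scope ring_scope.

Section Monomials.
Context {disp : Order.disp_t} {Phi : orderType disp}.
Implicit Types (g h k u v : @mon _ Phi) (p q : Phi).

Lemma mlt_irr g : ~ mlt g g.
Proof. by case=> p [+ _]; rewrite ltxx. Qed.

Lemma mlt_trans g h k : mlt g h -> mlt h k -> mlt g k.
Proof.
case=> p1 [lt1 e1] [p2 [lt2 e2]].
case: (ltgtP p1 p2) => [p12|p21|e12].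
- exists p2; split; first by rewrite e1.
  by move=> psi lt; rewrite e1 ?e2 //; apply: lt_trans lt.
- exists p1; split; first by rewrite -e2.
  by move=> psi lt; rewrite e1 ?e2 //; apply: lt_trans lt.
- subst p2; exists p1; split; first exact: lt_trans lt2.
  by move=> psi lt; rewrite e1 ?e2.
Qed.

Lemma mlt_asym g h : mlt g h -> ~ mlt h g.
Proof. by move=> gh /(mlt_trans gh); apply: mlt_irr. Qed.

Lemma mle_refl g : mle g g. Proof. by left. Qed.

Lemma mltW g h : mlt g h -> mle g h. Proof. by right. Qed.

Lemma mle_trans g h k : mle g h -> mle h k -> mle g k.
Proof. by case=> [->//|gh] [<-|hk]; right=> //; apply: mlt_trans gh hk. Qed.

Lemma mle_lt_trans g h k : mle g h -> mlt h k -> mlt g k.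
Proof. by case=> [->//|gh] /(mlt_trans gh). Qed.

Lemma mle_anti g h : mle g h -> mle h g -> g = h.
Proof. by case=> [//|gh] [//|/(mlt_asym gh)]. Qed.

Lemma mle_ltF g h : mle g h -> ~ mlt h g.
Proof. by move=> gh /(mle_lt_trans gh); apply: mlt_irr. Qed.

Lemma mle_neq_lt g h : mle g h -> g <> h -> mlt g h.
Proof. by case. Qed.

Lemma mmulC g h : mmul g h = mmul h g.
Proof. by apply: funext => p; rewrite /mmul addrC. Qed.

Lemma mmulK g h : mmul (mmul g h) (minv h) = g.
Proof. by apply: funext => p; rewrite /mmul /minv addrK. Qed.

Lemma mmulKl g h : mmul (mmul h g) (minv h) = g.
Proof. by rewrite [mmul h g]mmulC mmulK. Qed.

Lemma mmulVK g h : mmul (mmul g (minv h)) h = g.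
Proof. by apply: funext => p; rewrite /mmul /minv addrNK. Qed.

Lemma mmulKV g h : mmul h (mmul g (minv h)) = g.
Proof. by rewrite mmulC mmulVK. Qed.

Lemma mdivK g h : mmul g (minv (mmul g (minv h))) = h.
Proof. by apply: funext => p; rewrite /mmul /minv opprB addrC subrK. Qed.

Lemma mlt_mul2r k g h : mlt g h -> mlt (mmul g k) (mmul h k).
Proof.
case=> p [lt e]; exists p; split; first by rewrite /mmul ltrD2r.
by move=> psi /e; rewrite /mmul => ->.
Qed.

Lemma mlt_mul2l k g h : mlt g h -> mlt (mmul k g) (mmul k h).
Proof. by rewrite ![mmul k _]mmulC; apply: mlt_mul2r. Qed.

Lemma mle_mul2l k g h : mle g h -> mle (mmul k g) (mmul k h).
Proof. by case=> [->|/(mlt_mul2l k)]; [left|right]. Qed.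

Lemma mle_mul g h u v : mle g h -> mle u v -> mle (mmul g u) (mmul h v).
Proof.
move=> /(mle_mul2l u) gh /(mle_mul2l h) uv.
by apply: mle_trans uv; rewrite (mmulC g) (mmulC h).
Qed.

Lemma mlt_inv g h : mlt g h -> mlt (minv h) (minv g).
Proof.
case=> p [lt e]; exists p; split; first by rewrite /minv ltrN2.
by move=> psi /e; rewrite /minv => ->.
Qed.

Lemma mle_div2l g h k : mle (mmul g (minv h)) (mmul g (minv k)) -> mle k h.
Proof.
have eq_div2l u v : mmul g (minv u) = mmul g (minv v) -> v = u.
  by move=> e; rewrite -(mdivK g u) e mdivK.
case=> [/eq_div2l ->|lt]; first exact: mle_refl.
by right; move: (mlt_mul2l g (mlt_inv lt)); rewrite !mdivK.
Qed.

Lemma mabs_gt1 g : mlt mone g -> mabs g = g.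
Proof.
move=> g1; have inv1 : @minv _ Phi mone = mone.
  by apply: funext => p; rewrite /minv /mone oppr0.
have gV : mlt (minv g) g.
  by apply: (@mlt_trans _ mone) => //; rewrite -[X in mlt _ X]inv1; apply: mlt_inv.
by rewrite /mabs asboolF // => /mle_ltF.
Qed.

Lemma phim_lt p q : (p < q)%O -> mlt (phim p) (phim q).
Proof.
move=> pq; exists q; split; first by rewrite /phim eqxx gt_eqF // ltr01.
by move=> psi lt; rewrite /phim !ifN // gt_eqF // (lt_trans pq).
Qed.

Lemma phim_gt1 p : mlt mone (phim p).
Proof.
exists p; split; first by rewrite /mone /phim eqxx ltr01.
by move=> psi lt; rewrite /phim /mone ifN // gt_eqF.
Qed.

Lemma phim_neq1 p : phim p <> mone.
Proof. by move=> /(congr1 (fun g => g p)); rewrite /phim /mone eqxx => /eqP; rewrite oner_eq0. Qed.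

Lemma is_LF_phim p q : is_LF (phim p) q -> q = p.
Proof. by case; rewrite /phim; case: (eqVneq q p) => // _; rewrite eqxx. Qed.

End Monomials.

Section LeadingMonomial.
Context {disp : Order.disp_t} {Phi : orderType disp}.
Implicit Types (a b q : @ser _ Phi) (al be ga m : @mon _ Phi).

Definition is_LM a m := a m != 0 /\ forall be, a be != 0 -> mle be m.

Lemma is_LM_uniq a m1 m2 : is_LM a m1 -> is_LM a m2 -> m1 = m2.
Proof. by case=> n1 h1 [n2 h2]; apply: mle_anti; [apply: h2|apply: h1]. Qed.

Lemma is_LM_LM a m : is_LM a m -> LM a = m.
Proof.
move=> am; apply: (is_LM_uniq _ am).
exact: (epsilon_spec (inhabits mone) (is_LM a) (ex_intro _ m am)).
Qed.

Lemma szeroP a : a <> szero -> exists be, a be != 0.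
Proof.
move=> nz; apply: contra_notP nz => /forallNP h; apply: funext => be.
by move: (h be); case: eqP.
Qed.

Lemma LM_is_LM a : anti_wo mle (Supp a) -> a <> szero -> is_LM a (LM a).
Proof.
move=> aw /szeroP [be abe].
have [m Sm mx] := aw (Supp a) (@subset_refl _ _) (ex_intro _ be abe).
by rewrite (@is_LM_LM a m).
Qed.

Lemma smono_id al : smono al al = 1.
Proof. by rewrite /smono asboolT. Qed.

Lemma smono_neq al be : be <> al -> smono al be = 0.
Proof. by move=> ne; rewrite /smono asboolF. Qed.

Lemma smono_nz al be : smono al be != 0 -> be = al.
Proof. by rewrite /smono; case: asboolP => // _; rewrite eqxx. Qed.

Lemma smono_neq0 al : smono al <> szero.
Proof.
by move=> /(congr1 (fun a => a al)); rewrite smono_id => /eqP; rewrite oner_eq0.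
Qed.

Lemma is_LM_smono al : is_LM (smono al) al.
Proof. by split=> [|be /smono_nz ->]; rewrite ?smono_id ?oner_eq0 //; left. Qed.

Lemma LM_smono al : LM (smono al) = al.
Proof. exact/is_LM_LM/is_LM_smono. Qed.

Lemma smul0l a : smul szero a = szero.
Proof. by apply: funext => ga; rewrite /smul fsbig1 // => be [/=]; rewrite eqxx. Qed.

Lemma smul_neq0 q a ga : smul q a ga != 0 ->
  exists be, q be != 0 /\ a (mmul ga (minv be)) != 0.
Proof.
move=> /eqP nz; apply: contra_notP nz => /forallNP h.
by apply: fsbig1 => be /= qa; case: (h be).
Qed.

Lemma smul_smonol al b : smul (smono al) b = fun ga => b (mmul ga (minv al)).
Proof.
apply: funext => ga; rewrite /smul.
have [z|nz] := eqVneq (b (mmul ga (minv al))) 0.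
  by rewrite fsbig1 // => be [/smono_nz ->]; rewrite z eqxx.
rewrite (_ : [set be | _] = [set al]) ?fsbig_set1 ?smono_id ?mul1r //.
apply/seteqP; split => be /=; first by case=> /smono_nz.
by move=> ->; rewrite smono_id oner_eq0.
Qed.

Lemma is_LM_smul q a mq ma : is_LM q mq -> is_LM a ma ->
  is_LM (smul q a) (mmul mq ma) /\ smul q a (mmul mq ma) = q mq * a ma.
Proof.
move=> [nq hq] [na ha].
have only_mq : [set be | q be != 0 /\ a (mmul (mmul mq ma) (minv be)) != 0] = [set mq].
  apply/seteqP; split => be /=; last by move=> ->; rewrite mmulKl.
  case=> /hq qb /ha ab; apply: contra_notP (@mlt_irr _ _ ma) => ne.
  have /mlt_inv/(mlt_mul2l (mmul mq ma)) : mlt be mq by apply: mle_neq_lt.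
  by rewrite mmulKl => /(mle_ltF ab).
have top : smul q a (mmul mq ma) = q mq * a ma.
  by rewrite /smul only_mq fsbig_set1 mmulKl.
split => //; split; first by rewrite top mulf_neq0.
move=> ga /smul_neq0 [be [/hq qb /ha ab]].
by have := mle_mul qb ab; rewrite mmulKV.
Qed.

Lemma is_LM_shift b m al :
  is_LM b m -> is_LM (fun ga => b (mmul ga (minv al))) (mmul al m).
Proof.
move=> [nb hb]; split; first by rewrite mmulKl.
by move=> ga /hb /(mle_mul2l al); rewrite mmulKV.
Qed.

Lemma is_LM_ssum (I : choiceType) (F : I -> ser) i0 m :
  is_LM (F i0) m -> (forall i, i <> i0 -> forall be, F i be != 0 -> mlt be m) ->
  is_LM (ssum F) m /\ ssum F m = F i0 m.
Proof.
move=> [n0 h0] lower.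
have top : ssum F m = F i0 m.
  rewrite /ssum (_ : [set i | F i m != 0] = [set i0]) ?fsbig_set1 //.
  apply/seteqP; split => i /=; last by move=> ->.
  by move=> nz; apply: contra_notP (@mlt_irr _ _ m) => /lower; apply.
split => //; split; first by rewrite top.
move=> be /eqP nz; have [i Fi] : exists i, F i be != 0.
  by apply: contra_notP nz => /forallNP h; apply: fsbig1 => i /= /h.
have [ii0|ne] := pselect (i = i0); first by apply: h0; rewrite -ii0.
by right; apply: lower ne be Fi.
Qed.

End LeadingMonomial.

Lemma anti_wo_sub {X : Type} (le : X -> X -> Prop) (S T : set X) :
  S `<=` T -> anti_wo le T -> anti_wo le S.
Proof. by move=> ST awT A AS; apply: awT; apply: subset_trans AS ST. Qed.

Section AntiWellOrdered.
Context {disp : Order.disp_t} {Phi : orderType disp}.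
Implicit Types (X Y : set (@mon _ Phi)) (m : @mon _ Phi).

Lemma anti_wo1 m : anti_wo mle [set m].
Proof. by move=> A AS [x Ax]; exists x => // y /AS ->; rewrite (AS _ Ax); left. Qed.

(* Otherwise the elements of [X] with infinitely many elements of [X] above
   them have a maximum [x0]; but the least element above [x0] has only finitely
   many elements above it. *)
Lemma anti_wo_wo_finite X : anti_wo mle X ->
  (forall Y, Y `<=` X -> Y !=set0 -> exists2 m, Y m & forall y, Y y -> mle m y) ->
  finite_set X.
Proof.
move=> aw wo.
pose Z := [set x | X x /\ finite_set [set y | X y /\ mle x y]].
suff XZ : X `<=` Z.
  have [[x0 Xx0]|X0] := pselect (X !=set0).
    have [m Xm minm] := wo X (@subset_refl _ _) (ex_intro _ x0 Xx0).
    by apply: sub_finite_set (proj2 (XZ _ Xm)) => y Xy; split => //; apply: minm.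
  by apply: sub_finite_set (finite_set0 _) => x Xx; apply: X0; exists x.
move=> x Xx; apply: contrapT => nZx.
have [x0 [Xx0 nZx0] maxx0] :=
  aw [set y | X y /\ ~ Z y] (fun y yX => proj1 yX) (ex_intro _ x (conj Xx nZx)).
apply: nZx0; split => //.
have [[y1 y1X]|above0] := pselect ([set y | X y /\ mlt x0 y] !=set0).
  have [y0 [Xy0 lt0] miny0] := wo _ (fun y yX => proj1 yX) (ex_intro _ y1 y1X).
  have Zy0 : Z y0.
    by apply: contrapT => nZ; apply: mle_ltF (maxx0 _ (conj Xy0 nZ)) lt0.
  apply: (@sub_finite_set _ _ ([set x0] `|` [set y | X y /\ mle y0 y])).
    by move=> z [Xz [<-|ltz]]; [left|right; split=> //; apply: miny0].
  by rewrite finite_setU; split; [exact: finite_set1|exact: (proj2 Zy0)].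
apply: sub_finite_set (finite_set1 x0) => z [Xz [<-//|ltz]].
by exfalso; apply: above0; exists z.
Qed.

End AntiWellOrdered.

Section ValueGroup.
Context {disp : Order.disp_t} {Phi : orderType disp}.
Implicit Types (g h m : @mon _ Phi) (X : set (@mon _ Phi)) (a b q : @ser _ Phi).
Variable Gamma : set (@mon _ Phi).
Hypothesis HG : is_Gamma Gamma.

Lemma Gamma_H g : Gamma g -> isH g.
Proof. by case: HG => + _ _ _ _; apply. Qed.

Lemma Gamma_mul g h : Gamma g -> Gamma h -> Gamma (mmul g h).
Proof. by case: HG => _ _ + _ _; apply. Qed.

Lemma Gamma_inv g : Gamma g -> Gamma (minv g).
Proof. by case: HG => _ _ _ + _; apply. Qed.

Lemma Gamma_phim p : Gamma (phim p).
Proof. by case: HG => _ _ _ _; apply. Qed.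

(* Compare g and h at the leading fundamental monomial of h / g. *)
Lemma mlt_total g h : Gamma g -> Gamma h -> [\/ g = h, mlt g h | mlt h g].
Proof.
move=> Gg Gh; have [->|ne] := pselect (g = h); first by constructor 1.
pose D := msupp (mmul h (minv g)).
have DE p : D p <-> g p != h p by rewrite /D /msupp /mmul /minv /= subr_eq0 eq_sym.
have [p0 Dp0] : D !=set0.
  apply: contra_notP ne => /forallNP D0; apply: funext => p.
  by apply/eqP; apply: contrapT => /negP /DE /D0.
have [m Dm maxm] := Gamma_H (Gamma_mul Gh (Gamma_inv Gg)) (@subset_refl _ D)
  (ex_intro _ p0 Dp0).
have above p : (m < p)%O -> g p = h p.
  by move=> mp; apply/eqP; apply: contraTT mp => /DE /maxm; rewrite leNgt.
have /DE := Dm; case: (ltgtP (g m) (h m)) => // lt _; [constructor 2|constructor 3].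
- by exists m; split => // p /above.
- by exists m; split => // p /above ->.
Qed.

Lemma seq_max (s : seq mon) : (forall x, x \in s -> Gamma x) -> s != [::] ->
  exists2 m, m \in s & forall x, x \in s -> mle x m.
Proof.
elim: s => [//|x s IH] sG _.
have Gx : Gamma x by apply: sG; rewrite inE eqxx.
have [-> | s_nil] := eqVneq s [::].
  by exists x => [|y]; rewrite inE // => /eqP ->; left.
have [|m ms maxm] := IH _ s_nil; first by move=> y ys; apply: sG; rewrite inE ys orbT.
have Gm : Gamma m by apply: sG; rewrite inE ms orbT.
have [xm|xm|mx] := mlt_total Gx Gm.
- by exists m => [|y]; rewrite inE ?ms ?orbT // => /orP[/eqP ->|/maxm //]; left.
- by exists m => [|y]; rewrite inE ?ms ?orbT // => /orP[/eqP ->|/maxm //]; right.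
- exists x => [|y]; first by rewrite inE eqxx.
  by rewrite inE => /orP[/eqP ->|/maxm ym]; [left|right; apply: mle_lt_trans ym mx].
Qed.

Lemma finite_max X : finite_set X -> X `<=` Gamma -> X !=set0 ->
  exists2 m, X m & forall x, X x -> mle x m.
Proof.
move=> /finite_seqP [s ->] sG [x0 x0s].
have [|m ms maxm] := @seq_max s (fun x xs => sG x xs); last by exists m.
by case: s {sG} x0s.
Qed.

Lemma anti_woU X1 X2 : X1 `<=` Gamma -> X2 `<=` Gamma ->
  anti_wo mle X1 -> anti_wo mle X2 -> anti_wo mle (X1 `|` X2).
Proof.
move=> G1 G2 aw1 aw2 A AX [x0 Ax0].
have [[y1 [Ay1 X1y1]]|A1] := pselect ((A `&` X1) !=set0); last first.
  apply: aw2 (ex_intro _ x0 Ax0) => x Ax.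
  by case: (AX x Ax) => // X1x; case: A1; exists x.
have [m1 [Am1 X1m1] max1] := aw1 _ (@subIsetr _ _ _) (ex_intro _ y1 (conj Ay1 X1y1)).
have [[y2 [Ay2 X2y2]]|A2] := pselect ((A `&` X2) !=set0); last first.
  exists m1 => // x Ax; apply: max1; split => //.
  by case: (AX x Ax) => // X2x; case: A2; exists x.
have [m2 [Am2 X2m2] max2] := aw2 _ (@subIsetr _ _ _) (ex_intro _ y2 (conj Ay2 X2y2)).
have below x : A x -> mle x m1 \/ mle x m2.
  by move=> Ax; case: (AX x Ax) => Xx; [left; apply: max1|right; apply: max2].
have [e12|lt|lt] := mlt_total (G1 _ X1m1) (G2 _ X2m2).
- by exists m1 => // x /below []; rewrite e12.
- by exists m2 => // x /below [xm1|//]; apply: mle_trans xm1 (mltW lt).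
- by exists m1 => // x /below [//|xm2]; apply: mle_trans xm2 (mltW lt).
Qed.

Lemma smul_finite q a ga : anti_wo mle (Supp q) -> anti_wo mle (Supp a) ->
  finite_set [set be | q be != 0 /\ a (mmul ga (minv be)) != 0].
Proof.
move=> awq awa; apply: anti_wo_wo_finite; first by apply: anti_wo_sub awq => be [].
move=> Y YX [y0 Yy0].
have YS : [set mmul ga (minv y) | y in Y] `<=` Supp a.
  by move=> _ [y /YX [_ ay] <-].
have [_ [y1 Yy1 <-] maxy1] := awa _ YS (ex_intro _ _ (ex_intro2 _ _ y0 Yy0 erefl)).
by exists y1 => // y Yy; apply: (@mle_div2l _ _ ga); apply: maxy1; exists y.
Qed.

Lemma smul_supp q a : is_series Gamma q -> is_series Gamma a ->
  Supp (smul q a) `<=` Gamma.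
Proof.
move=> [Gq _] [Ga _] ga /smul_neq0 [be [qb ab]].
by rewrite -(mmulKV ga be); apply: Gamma_mul; [apply: Gq|apply: Ga].
Qed.

Section ProductSupport.
Variables q a : @ser _ Phi.
Hypotheses (sq : is_series Gamma q) (sa : is_series Gamma a).
Variable X : set (@mon _ Phi).
Hypothesis XS : X `<=` Supp (smul q a).

Let factors s := [set t | a t != 0 /\ X (mmul s t)].
Let lfactors := [set s | q s != 0 /\ factors s !=set0].
Let top s := epsilon (inhabits mone)
  (fun t => factors s t /\ forall t', factors s t' -> mle t' t).
(* Every left factor is dominated, in both [s] and [top s], by a record, and
   there are only finitely many records. *)
Let records := [set s | lfactors s /\
  forall s', lfactors s' -> mlt s s' -> mlt (top s') (top s)].

Lemma topP s : lfactors s ->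
  [/\ factors s (top s), Gamma s, Gamma (top s) & forall t, factors s t -> mle t (top s)].
Proof.
move=> [qs [t ft]].
have [] : factors s (top s) /\ forall t', factors s t' -> mle t' (top s).
  have [m fm maxm] := (proj2 sa) (factors s) (fun t' ft' => proj1 ft') (ex_intro _ t ft).
  exact: (epsilon_spec (inhabits mone)
    (fun t => factors s t /\ forall t', factors s t' -> mle t' t)
    (ex_intro _ m (conj fm maxm))).
by move=> [a_top Xtop] maxtop; split => //; [apply: (proj1 sq)|apply: (proj1 sa)].
Qed.

(* Along the records [top] strictly decreases while [s] increases, so
   a record of largest [top] is a least record. *)
Lemma records_finite : finite_set records.
Proof.
apply: anti_wo_wo_finite; first by apply: anti_wo_sub (proj2 sq) => s [[]].
move=> Y YR [y Yy].
have YS : [set top s | s in Y] `<=` Supp a.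
  by move=> _ [s /YR [/topP [[atop _] _ _ _] _] <-].
have [_ [y0 Yy0 <-] maxy0] := (proj2 sa) _ YS (ex_intro _ _ (ex_intro2 _ _ y Yy erefl)).
exists y0 => // s Ys.
have [lfs rec_s] := YR s Ys; have [_ Gs _ _] := topP lfs.
have [_ Gy0 _ _] := topP (proj1 (YR y0 Yy0)).
have [->|lt|lt] := mlt_total Gy0 Gs; [exact: mle_refl|exact: mltW|].
exfalso; apply: (mle_ltF (maxy0 (top s) (ex_intro2 _ _ s Ys erefl))).
by apply: rec_s lt; apply: (proj1 (YR y0 Yy0)).
Qed.

Lemma below_record s : lfactors s ->
  exists2 s', records s' & mle s s' /\ mle (top s) (top s').
Proof.
move=> lfs; pose D := [set s' | lfactors s' /\ mle s s' /\ mle (top s) (top s')].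
have [s1 [lfs1 [le1 letop1]] max1] := (proj2 sq) D (fun s' Ds' => proj1 (proj1 Ds'))
  (ex_intro _ s (conj lfs (conj (mle_refl _) (mle_refl _)))).
exists s1 => //; split => // s' lfs' lt.
have [_ _ Gtop' _] := topP lfs'; have [_ _ Gtop1 _] := topP lfs1.
have [e|//|lt'] := mlt_total Gtop' Gtop1; exfalso;
  apply: (mle_ltF (max1 s' _) lt); do 2!split=> //; try exact: mle_trans le1 (mltW lt).
- by rewrite e.
- exact: mle_trans letop1 (mltW lt').
Qed.

Lemma smul_supp_max : X !=set0 -> exists2 m, X m & forall x, X x -> mle x m.
Proof.
have factor x : X x -> exists s t, [/\ lfactors s, factors s t & x = mmul s t].
  move=> Xx; have [be [qb ab]] := smul_neq0 (XS Xx).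
  have fx : factors be (mmul x (minv be)) by rewrite /factors /= mmulKV.
  by exists be, (mmul x (minv be)); split => //; [split=> //; exists (mmul x (minv be))|rewrite mmulKV].
move=> [x0 /factor [s0 [t0 [lf0 _ _]]]].
pose M := [set mmul s (top s) | s in records].
have MG : M `<=` Gamma.
  by move=> _ [s [/topP [_ Gs Gt _] _] <-]; apply: Gamma_mul.
have [s1 r1 _] := below_record lf0.
have [_ [m rm <-] maxM] := finite_max (finite_image _ records_finite) MG
  (ex_intro _ _ (ex_intro2 _ _ s1 r1 erefl)).
exists (mmul m (top m)); first by have [[]] := topP (proj1 rm).
move=> x /factor [s [t [lfs fst ->]]].
have [s' rs' [les letop]] := below_record lfs.
have [_ _ _ maxt] := topP lfs.
apply: mle_trans (mle_mul (mle_refl s) (maxt _ fst)) _.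
apply: mle_trans (mle_mul les letop) _.
by apply: maxM; exists s'.
Qed.

End ProductSupport.

Lemma smul_series q a : is_series Gamma q -> is_series Gamma a ->
  is_series Gamma (smul q a).
Proof.
move=> sq sa; split; first exact: smul_supp.
by move=> X XS; apply: (smul_supp_max sq sa XS).
Qed.

Lemma smulDl q1 q2 a ga :
  finite_set [set be | q1 be != 0 /\ a (mmul ga (minv be)) != 0] ->
  finite_set [set be | q2 be != 0 /\ a (mmul ga (minv be)) != 0] ->
  smul (sadd q1 q2) a ga = smul q1 a ga + smul q2 a ga.
Proof.
rewrite /smul; set I1 := [set be | q1 be != 0 /\ _]; set I2 := [set be | q2 be != 0 /\ _].
move=> fin1 fin2.
have widen q : [set be | q be != 0 /\ a (mmul ga (minv be)) != 0] `<=` I1 `|` I2 ->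
    \sum_(be \in [set be | q be != 0 /\ a (mmul ga (minv be)) != 0])
       q be * a (mmul ga (minv be)) =
    \sum_(be \in I1 `|` I2) q be * a (mmul ga (minv be)).
  move=> sub; apply: fsbig_widen => // be [_ /= nI]; apply/eqP.
  by rewrite mulf_eq0; apply: contra_notT nI; rewrite negb_or => /andP.
rewrite (widen (sadd q1 q2)); last first.
  move=> be [/= q12 abe]; have [q10|q1be] := eqVneq (q1 be) 0; last by left.
  by right; split => //; move: q12; rewrite /sadd q10 add0r.
rewrite (widen q1) => [|be]; last by left.
rewrite (widen q2) => [|be]; last by right.
rewrite -fsbig_split; last by rewrite finite_setU.
by apply: eq_fsbigr => be _; rewrite /sadd mulrDl.
Qed.

Lemma smulZl c q a ga : smul (sscale c q) a ga = c * smul q a ga.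
Proof.
have [->|c0] := eqVneq c 0.
  by rewrite mul0r (_ : sscale 0 q = szero) ?smul0l //; apply: funext => be; rewrite /sscale mul0r.
rewrite /smul mulr_fsumr (_ : [set be | sscale c q be != 0 /\ _] =
  [set be | q be != 0 /\ a (mmul ga (minv be)) != 0]).
  by apply: eq_fsbigr => be _; rewrite /sscale mulrA.
by apply/seteqP; split => be /= [qbe abe]; split => //; move: qbe; rewrite /sscale mulf_eq0 ?negb_or ?c0 //= => /andP[].
Qed.

End ValueGroup.

Section Division.
Context {disp : Order.disp_t} {Phi : orderType disp}.
Implicit Types (q : @ser _ Phi) (be ga t : @mon _ Phi).
Variable Gamma : set (@mon _ Phi).
Hypothesis HG : is_Gamma Gamma.
Variables a b : @ser _ Phi.
Hypotheses (sa : is_series Gamma a) (a_neq0 : a <> szero) (sb : is_series Gamma b).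

Let ma := LM a.
Let LMa : is_LM a ma := LM_is_LM (proj2 sa) a_neq0.

Definition div_rem q : ser := fun ga => b ga - smul q a ga.

(* [q] is an initial segment of the long division of [b] by [a]: every
   monomial of the remainder lies below [be * LM a] for all [be] in [Supp q]. *)
Definition partial_quotient q := is_series Gamma q /\
  forall ga be, div_rem q ga != 0 -> q be != 0 -> mlt ga (mmul be ma).

Definition is_trunc q1 q2 := forall ga, q1 ga <> q2 ga ->
  q1 ga = 0 /\ forall be, q1 be != 0 -> mlt ga be.

Lemma is_trunc_neq0 q1 q2 be : is_trunc q1 q2 -> q1 be != 0 -> q2 be = q1 be.
Proof.
move=> tr nz; apply: contrapT => /nesym /tr [q1be _].
by move: nz; rewrite q1be eqxx.
Qed.

Lemma is_trunc_trans q1 q2 q3 : is_trunc q1 q2 -> is_trunc q2 q3 -> is_trunc q1 q3.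
Proof.
move=> t12 t23 ga ne.
have [e|] := pselect (q1 ga = q2 ga); last exact: t12.
rewrite e in ne; have [q2ga below] := t23 ga ne; rewrite e; split => // be nz.
by apply: below; rewrite (is_trunc_neq0 t12 nz).
Qed.

Lemma is_trunc_anti q1 q2 : is_trunc q1 q2 -> is_trunc q2 q1 -> q1 = q2.
Proof.
move=> t12 t21; apply: funext => ga; apply: contrapT => ne.
by apply: (ne); rewrite (proj1 (t12 ga ne)) (proj1 (t21 ga (nesym ne))).
Qed.

Lemma smul_eq_local u q ga :
  (forall be, a (mmul ga (minv be)) != 0 -> u be = q be) -> smul u a ga = smul q a ga.
Proof.
move=> uq; rewrite /smul (_ : [set be | u be != 0 /\ _] =
  [set be | q be != 0 /\ a (mmul ga (minv be)) != 0]).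
  by apply: eq_fsbigr => be; rewrite inE => -[_ /uq ->].
by apply/seteqP; split => be /= [nz abe]; split => //; rewrite ?uq // -uq.
Qed.

Definition pquot := {q | partial_quotient q}.
Definition pquot_trunc (x y : pquot) : bool := `[< is_trunc (sval x) (sval y) >].

Section Chain.
Variable A : set pquot.
Hypothesis A_chain : total_on A pquot_trunc.

Let occurs ga q := (exists x, A x /\ sval x = q) /\ q ga != 0.

Definition chain_union ga :=
  if `[< exists q, occurs ga q >] then epsilon (inhabits szero) (occurs ga) ga else 0.

Lemma chain_coh x y ga : A x -> A y -> sval x ga != 0 -> sval y ga != 0 ->
  sval x ga = sval y ga.
Proof.
move=> Ax Ay nx ny.
by case: (A_chain Ax Ay) => /asboolP tr; rewrite (is_trunc_neq0 tr).
Qed.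

Lemma chain_unionP ga : chain_union ga != 0 -> exists x, A x /\ sval x ga = chain_union ga.
Proof.
rewrite /chain_union; case: asboolP => [ex _|_]; last by rewrite eqxx.
by have [[x [Ax <-]] _] := epsilon_spec (inhabits szero) (occurs ga) ex; exists x.
Qed.

Lemma chain_unionE x ga : A x -> sval x ga != 0 -> chain_union ga = sval x ga.
Proof.
move=> Ax nz; have ex : exists q, occurs ga q by exists (sval x); split=> //; exists x.
rewrite /chain_union asboolT //.
have [[y [Ay <-]] ny] := epsilon_spec (inhabits szero) (occurs ga) ex.
exact: chain_coh.
Qed.

Lemma chain_union_trunc x : A x -> is_trunc (sval x) chain_union.
Proof.
move=> Ax ga ne.
have [x0|nz] := eqVneq (sval x ga) 0; last by case: ne; rewrite (chain_unionE Ax nz).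
have [|y [Ay e]] := chain_unionP (ga := ga).
  by apply/eqP => u0; apply: ne; rewrite x0 u0.
have ny : sval y ga != 0 by rewrite e; apply/eqP => u0; apply: ne; rewrite x0 u0.
have xy : sval x ga <> sval y ga by rewrite x0 => /esym/eqP; apply/negP.
split => //; case: (A_chain Ax Ay) => /asboolP tr; first exact: (proj2 (tr ga xy)).
by move: ny; rewrite (proj1 (tr ga (nesym xy))) eqxx.
Qed.

Lemma chain_union_series : is_series Gamma chain_union.
Proof.
have uG ga : chain_union ga != 0 -> Gamma ga.
  move=> nz; have [x [_ e]] := chain_unionP nz.
  by apply: (proj1 (proj1 (svalP x))); rewrite /Supp /= e.
split=> [ga|X XS [x0 Xx0]]; first exact: uG.
have [y [Ay ey]] := chain_unionP (XS _ Xx0).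
have y_x0 : sval y x0 != 0 by rewrite ey; apply: XS.
pose X' := [set z | X z /\ mle x0 z].
have X'S : X' `<=` Supp (sval y).
  move=> z [Xz le0z]; apply: contrapT => /negP; rewrite negbK => /eqP yz.
  have [//|_ below] := chain_union_trunc Ay (ga := z).
    by rewrite yz => /esym/eqP; apply/negP; apply: XS.
  exact: mle_ltF le0z (below _ y_x0).
have [m [Xm le0m] maxm] := (proj2 (proj1 (svalP y))) X' X'S
  (ex_intro _ x0 (conj Xx0 (mle_refl _))).
exists m => // z Xz.
have [e|lt|lt] := mlt_total HG (uG _ (XS _ Xz)) (uG _ (XS _ Xx0)).
- by rewrite e.
- exact: mle_trans (mltW lt) le0m.
- by apply: maxm; split=> //; right.
Qed.

Lemma chain_union_valid : partial_quotient chain_union.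
Proof.
split=> [|ga be rem_nz]; first exact: chain_union_series.
move=> u_be; have [x [Ax e]] := chain_unionP u_be.
have x_be : sval x be != 0 by rewrite e.
apply: contrapT => nlt.
have loc : smul chain_union a ga = smul (sval x) a ga.
  apply: smul_eq_local => be' abe'; apply: contrapT => ne.
  have [_ below] := chain_union_trunc Ax (nesym ne).
  apply: nlt; apply: mle_lt_trans (mlt_mul2r ma (below _ x_be)).
  by have /(mle_mul2l be') := proj2 LMa _ abe'; rewrite mmulKV.
apply: nlt; apply: (proj2 (svalP x)) _ _ _ x_be.
by move: rem_nz; rewrite /div_rem loc.
Qed.

End Chain.

Lemma exists_maximal_pquot : exists x : pquot, forall y, pquot_trunc x y -> y = x.
Proof.
apply: Zorn.
- by move=> x; apply/asboolP => ga [].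
- by move=> x y z /asboolP xy /asboolP yz; apply/asboolP; apply: is_trunc_trans xy yz.
- move=> [q1 v1] [q2 v2] /asboolP /= t12 /asboolP /= t21.
  move: v2; rewrite -(is_trunc_anti t12 t21) => v2.
  by rewrite (Prop_irrelevance v1 v2).
- move=> A A_chain; exists (exist _ _ (chain_union_valid A_chain)) => x Ax.
  by apply/asboolP; apply: chain_union_trunc.
Qed.

Lemma div_rem_series q : is_series Gamma q -> is_series Gamma (div_rem q).
Proof.
move=> sq; have [Gqa awqa] := smul_series HG sq sa.
have sub : Supp (div_rem q) `<=` Supp b `|` Supp (smul q a).
  move=> ga; rewrite /Supp /div_rem /=; have [->|] := eqVneq (b ga) 0; last by left.
  by rewrite sub0r oppr_eq0; right.
split; first by move=> ga /sub [/(proj1 sb)|/Gqa].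
exact: anti_wo_sub sub (anti_woU HG (proj1 sb) Gqa (proj2 sb) awqa).
Qed.

Section Extension.
Variable q : @ser _ Phi.
Hypotheses (pq : partial_quotient q) (rem_neq0 : div_rem q <> szero).

Let rho := LM (div_rem q).
Let LMrem : is_LM (div_rem q) rho := LM_is_LM (proj2 (div_rem_series (proj1 pq))) rem_neq0.
Let tau := mmul rho (minv ma).
Let c := div_rem q rho / a ma.
Let q' := sadd q (sscale c (smono tau)).

Let tau_ma : mmul tau ma = rho. Proof. exact: mmulVK. Qed.

Lemma c_neq0 : c != 0.
Proof. by rewrite mulf_neq0 ?invr_neq0 //; [apply: (proj1 LMrem)|apply: (proj1 LMa)]. Qed.

Lemma q_gt_tau be : q be != 0 -> mlt tau be.
Proof.
by move=> /(proj2 pq rho be (proj1 LMrem)) /(mlt_mul2r (minv ma)); rewrite mmulK.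
Qed.

Lemma q_tau : q tau = 0.
Proof. by apply/eqP; apply: contrapT => /negP /q_gt_tau /mlt_irr. Qed.

Lemma extension_series : is_series Gamma q'.
Proof.
have [Gq awq] := proj1 pq.
have Gtau : Gamma tau := Gamma_mul HG (proj1 (div_rem_series (proj1 pq)) _ (proj1 LMrem))
  (Gamma_inv HG (proj1 sa _ (proj1 LMa))).
have sub : Supp q' `<=` Supp q `|` [set tau].
  move=> be; rewrite /Supp /q' /sadd /=; have [->|] := eqVneq (q be) 0; last by left.
  by rewrite add0r /sscale mulf_eq0 negb_or => /andP [_ /smono_nz]; right.
split; first by move=> be /sub [/Gq|->].
have Gt : [set tau] `<=` Gamma by move=> _ ->.
exact: anti_wo_sub sub (anti_woU HG Gq Gt awq (@anti_wo1 _ _ tau)).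
Qed.

Lemma div_rem_extension ga : div_rem q' ga = div_rem q ga - c * a (mmul ga (minv tau)).
Proof.
have [_ awq] := proj1 pq; have [_ aw'] := extension_series.
have aw_tau : anti_wo mle (Supp (sscale c (smono tau))).
  apply: anti_wo_sub (@anti_wo1 _ _ tau) => be.
  by rewrite /Supp /sscale /= mulf_eq0 negb_or => /andP [_ /smono_nz].
rewrite /div_rem smulDl ?smulZl ?smul_smonol ?opprD ?addrA //; apply: smul_finite => //.
all: exact: proj2 sa.
Qed.

(* The new term cancels the leading term [rho] of the remainder and creates
   only terms below it. *)
Lemma div_rem_extension_lt ga : div_rem q' ga != 0 -> mlt ga rho.
Proof.
move=> rem'_nz.
have Gga : Gamma ga.
  move: rem'_nz; rewrite /div_rem; have [->|bga _] := eqVneq (b ga) 0; last exact: (proj1 sb).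
  by rewrite sub0r oppr_eq0 => /(smul_supp HG extension_series sa).
have Grho : Gamma rho := proj1 (div_rem_series (proj1 pq)) _ (proj1 LMrem).
move: rem'_nz; rewrite div_rem_extension.
have [->|//|lt] := mlt_total HG Gga Grho.
  by rewrite /tau mdivK /c divfK ?subrr ?eqxx //; apply: (proj1 LMa).
have -> : div_rem q ga = 0.
  by apply/eqP; apply: contrapT => /negP /(proj2 LMrem) /mle_ltF; apply.
have -> : a (mmul ga (minv tau)) = 0.
  apply/eqP; apply: contrapT => /negP /(proj2 LMa) /(mle_mul2l tau).
  by rewrite mmulKV tau_ma => /mle_ltF; apply.
by rewrite mulr0 subrr eqxx.
Qed.

Lemma extension_valid : partial_quotient q'.
Proof.
split=> [|ga be /div_rem_extension_lt lt]; first exact: extension_series.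
have [q_be|q_be _] := eqVneq (q be) 0; last exact: mlt_trans lt (proj2 pq _ _ (proj1 LMrem) q_be).
rewrite /q' /sadd q_be add0r /sscale mulf_eq0 negb_or.
by move=> /andP [_ /smono_nz ->]; rewrite tau_ma.
Qed.

Lemma extension_trunc : is_trunc q q'.
Proof.
move=> ga ne; have : c * smono tau ga != 0.
  by apply: contra_notN ne => /eqP e; rewrite /q' /sadd /sscale e addr0.
rewrite mulf_eq0 negb_or => /andP [_ /smono_nz ->].
by split; [exact: q_tau|exact: q_gt_tau].
Qed.

Lemma extension_neq : q' <> q.
Proof.
move=> /(congr1 (fun u => u tau)); rewrite /q' /sadd /sscale smono_id mulr1 q_tau add0r.
by move/eqP; rewrite (negbTE c_neq0).
Qed.

End Extension.

Lemma div_exists : exists q, is_series Gamma q /\ smul q a = b.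
Proof.
have [[q pq] maxq] := exists_maximal_pquot.
exists q; split; first exact: proj1 pq.
have [rem0|rem_nz] := pselect (div_rem q = szero).
  apply: funext => ga; move: (congr1 (fun u => u ga) rem0).
  by rewrite /div_rem => /eqP; rewrite subr_eq0 => /eqP.
have := maxq (exist _ _ (extension_valid pq rem_nz)).
move=> /(_ (asboolT (extension_trunc pq rem_nz))) /(congr1 sval) /=.
by move/(extension_neq pq rem_nz).
Qed.

End Division.

Lemma sdivP {disp : Order.disp_t} {Phi : orderType disp} (Gamma : set (@mon _ Phi)) a b :
  is_Gamma Gamma -> is_series Gamma a -> a <> szero -> is_series Gamma b ->
  is_series Gamma (sdiv Gamma b a) /\ smul (sdiv Gamma b a) a = b.
Proof.
move=> HG sa a0 sb.
exact: (epsilon_spec _ (fun q => is_series Gamma q /\ smul q a = b) (div_exists HG sa a0 sb)).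
Qed.

Section HardyType.
Context {disp : Order.disp_t} {Phi : orderType disp}.
Implicit Types (a : @ser _ Phi) (al be : @mon _ Phi) (p f : Phi).
Variable Gamma : set (@mon _ Phi).
Hypothesis HG : is_Gamma Gamma.
Variable d : @ser _ Phi -> @ser _ Phi.
Hypothesis Hd : hardy_type Gamma d.

Lemma smono_series al : Gamma al -> is_series Gamma (smono al).
Proof.
move=> Gal; split=> [be /smono_nz -> //|].
exact: anti_wo_sub (@smono_nz _ _ al) (@anti_wo1 _ _ al).
Qed.

Lemma d_series a : is_series Gamma a -> is_series Gamma (d a).
Proof. by case: Hd => [[+ _ _ _] _ _ _]; apply. Qed.

Lemma d_smono_neq0 al : Gamma al -> al <> mone -> d (smono al) <> szero.
Proof.
case: Hd => _ HD1 _ _ Gal al1 /(HD1 _ (smono_series Gal)) [r /(congr1 (fun u => u al))].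
rewrite /sscale /sone smono_id smono_neq // mulr0 => /eqP; by rewrite oner_eq0.
Qed.

Definition dlog_phim p := sdiv Gamma (d (smono (phim p))) (smono (phim p)).

Lemma dlog_phimP p : is_series Gamma (dlog_phim p) /\
  smul (dlog_phim p) (smono (phim p)) = d (smono (phim p)).
Proof.
have s := smono_series (Gamma_phim HG p).
exact: sdivP HG s (@smono_neq0 _ _ _) (d_series s).
Qed.

Lemma is_LM_dlog_phim p : is_LM (dlog_phim p) (theta Gamma d p).
Proof.
have [sq eq] := dlog_phimP p.
have q_neq0 : dlog_phim p <> szero.
  move=> q0; apply: (d_smono_neq0 (Gamma_phim HG p) (@phim_neq1 _ _ p)).
  by rewrite -eq q0 smul0l.
exact: LM_is_LM (proj2 sq) q_neq0.
Qed.

(* HD3 for [phim f] and [phim p], whose equality case is excluded because they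
   are not comparable. *)
Lemma dlog_phim_lt p f be : (p < f)%O -> dlog_phim p be != 0 -> mlt be (theta Gamma d f).
Proof.
move=> pf nz; case: Hd => _ _ _ HD3.
have [] := HD3 _ _ (smono_series (Gamma_phim HG f)) (smono_series (Gamma_phim HG p))
  (@smono_neq0 _ _ _) (@smono_neq0 _ _ _).
- by rewrite !LM_smono (mabs_gt1 (phim_gt1 p)) (mabs_gt1 (phim_gt1 f)); apply: phim_lt.
- by rewrite LM_smono (mabs_gt1 (phim_gt1 p)); apply: phim_gt1.
have [q0 _] := is_LM_dlog_phim p.
case=> [q_eq0|[_ le]]; first by move: q0; rewrite /dlog_phim q_eq0 /szero eqxx.
move=> /proj1 comparable; apply: mle_lt_trans (proj2 (is_LM_dlog_phim p) _ nz) _.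
have ne : theta Gamma d p <> theta Gamma d f.
  move=> e; have [c []] := comparable (esym e).
  rewrite !LM_smono => /is_LF_phim cf /is_LF_phim cp.
  by move: pf; rewrite -cp cf ltxx.
exact: mle_neq_lt le ne.
Qed.

Lemma is_LM_d_smono al f : Gamma al -> is_LF al f ->
  is_LM (d (smono al)) (mmul al (theta Gamma d f)) /\
  d (smono al) (mmul al (theta Gamma d f)) = al f * dlog_phim f (theta Gamma d f).
Proof.
move=> Gal [alf maxf]; case: Hd => [[_ _ D3 _] _ _ _].
have [_ ->] := D3 al Gal; rewrite smul_smonol.
set F := fun p => sscale (al p) _.
have [nq maxq] := is_LM_dlog_phim f.
have [LMF topF] : is_LM (ssum F) (theta Gamma d f) /\
    ssum F (theta Gamma d f) = F f (theta Gamma d f).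
  apply: is_LM_ssum => [|p pf be].
    split=> [|be]; first by rewrite /F /sscale mulf_neq0.
    by rewrite /F /sscale mulf_eq0 negb_or => /andP [_ /maxq].
  rewrite /F /sscale mulf_eq0 negb_or => /andP [alp /dlog_phim_lt]; apply.
  by rewrite lt_neqAle maxf // andbT; apply/eqP.
by split; [exact: is_LM_shift|rewrite mmulKl topF].
Qed.

(* HD2, used in both directions. *)
Lemma LM_d_smono_lt al al' : Gamma al -> Gamma al' -> al <> mone -> al' <> mone ->
  mlt al al' -> mlt (LM (d (smono al))) (LM (d (smono al'))).
Proof.
move=> Gal Gal' al1 al'1 lt; case: Hd => _ _ HD2 _.
have HD2_mono u v : Gamma u -> Gamma v -> u <> mone -> v <> mone ->
    sle (smono u) (smono v) <-> sle (d (smono u)) (d (smono v)).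
  move=> Gu Gv u1 v1; apply: HD2 (smono_series Gu) (smono_series Gv) _ _ _ _;
    rewrite ?LM_smono //; exact: smono_neq0.
have [|d0|[_ le]] := (proj1 (HD2_mono _ _ Gal Gal' al1 al'1)).
- by right; split; [exact: smono_neq0|rewrite !LM_smono; right].
- by case: (d_smono_neq0 Gal al1).
suff ne : LM (d (smono al)) <> LM (d (smono al')) by exact: mle_neq_lt le ne.
move=> e; have [/smono_neq0 //|[_]] : sle (smono al') (smono al).
  by apply/(HD2_mono _ _ Gal' Gal al'1 al1); right; split; [exact: d_smono_neq0|rewrite e; left].
by rewrite !LM_smono => /mle_ltF; apply.
Qed.

Lemma is_LM_d a f : is_series Gamma a -> a <> szero -> is_LF (LM a) f ->
  is_LM (d a) (mmul (LM a) (theta Gamma d f)) /\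
  d a (mmul (LM a) (theta Gamma d f)) = LC a * (LM a f * dlog_phim f (theta Gamma d f)).
Proof.
move=> sa a0 LFf; have [na maxa] := LM_is_LM (proj2 sa) a0.
have Gma : Gamma (LM a) := proj1 sa _ na.
have ma1 : LM a <> mone by move=> e; move: (proj1 LFf); rewrite e /mone eqxx.
have [LMd topd] := is_LM_d_smono Gma LFf.
case: Hd => [[_ D2 _ D4] _ _ _]; have [_ ->] := D4 a sa.
set F := fun al => sscale (a al) (d (smono al)).
have [] : is_LM (ssum F) (mmul (LM a) (theta Gamma d f)) /\
    ssum F (mmul (LM a) (theta Gamma d f)) = F (LM a) (mmul (LM a) (theta Gamma d f)).
  apply: is_LM_ssum => [|al ne be].
    split=> [|be]; last by rewrite /F /sscale mulf_eq0 negb_or => /andP [_ /(proj2 LMd)].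
    by rewrite /F /sscale topd !mulf_neq0 //; [exact: (proj1 LFf)|exact: (proj1 (is_LM_dlog_phim f))].
  rewrite /F /sscale mulf_eq0 negb_or => /andP [aal dal].
  have al1 : al <> mone by move=> e; move: dal; rewrite e -/sone D2 eqxx.
  have Gal : Gamma al := proj1 sa _ aal.
  have [_ maxd] := LM_is_LM (proj2 (d_series (smono_series Gal))) (d_smono_neq0 Gal al1).
  apply: mle_lt_trans (maxd _ dal) _; rewrite -(is_LM_LM LMd).
  exact: LM_d_smono_lt Gal Gma al1 ma1 (mle_neq_lt (maxa _ aal) ne).
by move=> LMs ->; rewrite /F /sscale topd.
Qed.

Lemma dlog_LT a f : is_series Gamma a -> a <> szero -> is_LF (LM a) f ->
  let q := sdiv Gamma (d a) a in
  [/\ LT q = sscale (LM a f) (LT (dlog_phim f)), LM q = theta Gamma d f &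
      LC q = LM a f * LC (dlog_phim f)].
Proof.
move=> sa a0 LFf q; have [sq eq] := sdivP HG sa a0 (d_series sa).
have [LMd topd] := is_LM_d sa a0 LFf.
have q0 : q <> szero by move=> e; move: (proj1 LMd); rewrite -eq -/q e smul0l eqxx.
have LMa := LM_is_LM (proj2 sa) a0.
have [LMqa topqa] := is_LM_smul (LM_is_LM (proj2 sq) q0) LMa.
rewrite -/q eq in LMqa topqa.
have LMqa_d := is_LM_uniq LMqa LMd.
have LMq : LM q = theta Gamma d f by rewrite -(mmulK (LM q) (LM a)) LMqa_d mmulKl.
have LCq : LC q = LM a f * LC (dlog_phim f).
  by apply: (mulIf (proj1 LMa)); rewrite /LC -topqa LMqa_d topd mulrC.
split => //; apply: funext => be.
by rewrite /LT LCq LMq /sscale mulrA.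
Qed.

Lemma is_LF_exists g : Gamma g -> g <> mone -> exists f, is_LF g f.
Proof.
move=> Gg g1; have [p gp] : msupp g !=set0.
  apply: contra_notP g1 => /forallNP g0; apply: funext => p.
  by apply/eqP; apply: contrapT => /negP gp; apply: (g0 p).
by have [f gf maxf] := Gamma_H HG Gg (@subset_refl _ _) (ex_intro _ p gp); exists f.
Qed.

Lemma Theta_eq_Psi : Theta Gamma d = Psi Gamma d.
Proof.
apply/seteqP; split => x [].
  move=> p _ <-; exists (smono (phim p)); last by [].
  split; first exact: smono_series (Gamma_phim HG p).
  by split; [exact: smono_neq0|rewrite LM_smono; exact: phim_neq1].
move=> a [sa [a0 ma1]] <-; have [na _] := LM_is_LM (proj2 sa) a0.
have [f LFf] := is_LF_exists (proj1 sa _ na) ma1.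
by have [_ e _] := dlog_LT sa a0 LFf; exists f.
Qed.

End HardyType.

Theorem mainTheorem3 (disp : Order.disp_t) (Phi : orderType disp)
  (Gamma : set (@mon _ Phi)) (d : @ser _ Phi -> @ser _ Phi) :
  is_Gamma Gamma -> hardy_type Gamma d ->
  (forall a : ser, is_series Gamma a -> a <> szero -> LM a <> mone ->
     forall phi : Phi, is_LF (LM a) phi ->
       let q := sdiv Gamma (d a) a in
       let q0 := sdiv Gamma (d (smono (phim phi))) (smono (phim phi)) in
       [/\ LT q = sscale (LM a phi) (LT q0),
           LM q = theta Gamma d phi &
           LC q = LM a phi * LC q0]) /\
  (forall g : mon, is_glb Gamma (Theta Gamma d) g <-> is_glb Gamma (Psi Gamma d) g).
Proof.
move=> HG Hd; split=> [a sa a0 _ phi LFphi|g]; first exact: dlog_LT.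
by rewrite (Theta_eq_Psi HG Hd).
Qed.
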